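(* Given $R_1>0$, there exists a unique $q\in C([0,\infty))\cap C^\infty((0,\infty))$ solution to $$\partial_{ss}q+\Big(\frac1s+\frac{3s}{R_1(1+\frac{s^2}{2R_1})}\Big)\partial_sq-\frac{q}{s^2}=-\frac{12s}{(1+\frac{s^2}{2R_1})^3},\quad s\in(0,\infty),\qquad q(0)=0,\quad\lim_{s\to\infty}q(s)=0.$$ Furthermore, $$q(s)=\frac{48R_1^3}{5s^3}+\mathrm{rem}(s),\qquad\partial_sq(s)=-\frac{144R_1^3}{5s^4}+\frac{\mathrm{rem}(s)}{s},$$ where $|\mathrm{rem}(s)|\le K[R_1]/s^4$ for $s>1$, with $K[R_1]$ a constant depending only on $R_1$. *)

From Stdlib Require Import Reals.
From Coquelicot Require Import Coquelicot.
Open Scope R_scope.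

Definition cont_on_nonneg (q : R -> R) : Prop :=
  (forall s, 0 < s -> continuous q s) /\
  filterlim q (at_right 0) (locally (q 0)).

Definition smooth_on_pos (q : R -> R) : Prop :=
  forall (n : nat) (s : R), 0 < s -> ex_derive (Derive_n q n) s.

Definition bvp (R1 : R) (q : R -> R) : Prop :=
  cont_on_nonneg q /\ smooth_on_pos q /\
  (forall s, 0 < s ->
     Derive_n q 2 s
     + (1 / s + 3 * s / (R1 * (1 + s ^ 2 / (2 * R1)))) * Derive q s
     - q s / s ^ 2
     = - (12 * s) / (1 + s ^ 2 / (2 * R1)) ^ 3) /\
  q 0 = 0 /\
  is_lim q p_infty 0.

(* The explicit function q(s) = 48 R1^3 s / (5 (2 R1 + s^2)^2) solves the problem: it is a
   rational function without real poles, hence smooth, and its expansion at infinity gives the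
   asymptotics.  Uniqueness is a maximum principle: the difference w of two solutions satisfies
   w'' + b(s) w' = w / s^2 and vanishes at 0 and at infinity, so a positive value of w would
   produce an interior maximum where w' = 0 and hence w'' = w / s^2 > 0, which is impossible. *)

From Stdlib Require Import Reals Lra.
From Coquelicot Require Import Coquelicot.
Open Scope R_scope.

Inductive polynomial_fun : (R -> R) -> Prop :=
| polynomial_const c : polynomial_fun (fun _ => c)
| polynomial_id : polynomial_fun (fun x => x)
| polynomial_plus f g :
    polynomial_fun f -> polynomial_fun g -> polynomial_fun (fun x => f x + g x)
| polynomial_mult f g :
    polynomial_fun f -> polynomial_fun g -> polynomial_fun (fun x => f x * g x)
| polynomial_ext f g : polynomial_fun f -> (forall x, f x = g x) -> polynomial_fun g.

Lemma polynomial_fun_derive f :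
  polynomial_fun f -> exists df, polynomial_fun df /\ forall x, is_derive f x (df x).
Proof.
induction 1 as [c| |f g _ [df [Pdf Hf]] _ [dg [Pdg Hg]]
               |f g Pf [df [Pdf Hf]] Pg [dg [Pdg Hg]]|f g _ [df [Pdf Hf]] Efg].
- exists (fun _ => 0); split; [constructor|]; intro x; exact (is_derive_const c x).
- exists (fun _ => 1); split; [constructor|]; intro x; exact (is_derive_id x).
- exists (fun x => df x + dg x); split; [now constructor|].
  intro x; exact (@is_derive_plus R_AbsRing R_NormedModule f g x _ _ (Hf x) (Hg x)).
- exists (fun x => df x * g x + f x * dg x).
  split; [apply polynomial_plus; now apply polynomial_mult|].
  intro x; exact (@is_derive_mult R_AbsRing f g x _ _ (Hf x) (Hg x) Rmult_comm).
- exists df; split; [exact Pdf|].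
  intro x; exact (@is_derive_ext R_AbsRing R_NormedModule f g x _ Efg (Hf x)).
Qed.

Definition rational_over (D f : R -> R) : Prop :=
  exists P k, polynomial_fun P /\ forall x, f x = P x / D x ^ k.

Section RationalOver.

Variable D : R -> R.
Hypothesis D_poly : polynomial_fun D.
Hypothesis D_neq0 : forall x, D x <> 0.

Lemma rational_over_derive f :
  rational_over D f -> exists df, rational_over D df /\ forall x, is_derive f x (df x).
Proof.
intros [P [k [HP Ef]]].
destruct (polynomial_fun_derive P HP) as [dP [HdP DP]].
destruct (polynomial_fun_derive D D_poly) as [dD [HdD DD]].
exists (fun x => (dP x * D x - INR k * dD x * P x) / D x ^ S k); split.
- exists (fun x => dP x * D x - INR k * dD x * P x), (S k); split; [|easy].
  apply (polynomial_ext (fun x => dP x * D x + (-1) * (INR k * dD x * P x)));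
    [now repeat constructor | intro x; ring].
- intro x.
  assert (Dk := is_derive_div P (fun t => D t ^ k) x _ _ (DP x)
                  (is_derive_pow D k x _ (DD x)) (pow_nonzero _ k (D_neq0 x))).
  apply (is_derive_ext _ _ x _ (fun t => eq_sym (Ef t))).
  replace ((dP x * D x - INR k * dD x * P x) / D x ^ S k)
    with ((dP x * D x ^ k - P x * (INR k * dD x * D x ^ Init.Nat.pred k)) / (D x ^ k) ^ 2);
    [exact Dk|].
  specialize (D_neq0 x).
  destruct k as [|k]; [simpl; field; easy|].
  simpl Init.Nat.pred; simpl pow; field; split; [apply pow_nonzero|]; easy.
Qed.

Lemma rational_over_Derive_n f :
  rational_over D f -> forall n, rational_over D (Derive_n f n).
Proof.
intros Hf n; induction n as [|n IH]; [exact Hf|].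
destruct (rational_over_derive _ IH) as [df [[P [k [HP Edf]]] Hdf]].
exists P, k; split; [exact HP|].
intro x; simpl; rewrite (is_derive_unique _ _ _ (Hdf x)); apply Edf.
Qed.

Lemma rational_over_ex_derive_n f :
  rational_over D f -> forall n x, ex_derive (Derive_n f n) x.
Proof.
intros Hf n x.
destruct (rational_over_derive _ (rational_over_Derive_n f Hf n)) as [df [_ Hdf]].
exists (df x); apply Hdf.
Qed.

End RationalOver.

Lemma filterlim_minus_locally {T : Type} {F : (T -> Prop) -> Prop} {FF : Filter F}
    (f g : T -> R) (a b : R) :
  filterlim f F (locally a) -> filterlim g F (locally b) ->
  filterlim (fun x => f x - g x) F (locally (a - b)).
Proof.
intros Hf Hg.
exact (filterlim_comp_2 f (fun x => opp (g x)) plus Hf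
         (filterlim_comp _ _ _ g opp F _ _ Hg (filterlim_opp b)) (filterlim_plus a (opp b))).
Qed.

Lemma is_derive_local_max (f : R -> R) (a m b l : R) :
  a < m < b -> (forall x, a < x < b -> f x <= f m) -> is_derive f m l -> l = 0.
Proof.
intros Hm Hmax Hf.
exact (deriv_maximum f a b m (exist _ l (proj1 (is_derive_Reals f m l) Hf))
         (proj1 Hm) (proj2 Hm) (fun x Hax Hxb => Hmax x (conj Hax Hxb))).
Qed.

Lemma is_derive_local_max_second (f df : R -> R) (a m b l : R) :
  a < m < b -> (forall x, a <= x <= b -> f x <= f m) ->
  (forall x, a < x < b -> is_derive f x (df x)) ->
  df m = 0 -> is_derive df m l -> l <= 0.
Proof.
intros Hm Hmax Hf dfm0 Hdf.
destruct (Rle_or_lt l 0) as [l_le0|l_gt0]; [easy|exfalso].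
destruct (proj1 (is_derive_Reals df m l) Hdf l l_gt0) as [delta Hdelta].
set (h := Rmin (delta / 2) ((b - m) / 2)).
assert (Hh : 0 < h /\ h < delta /\ m + h < b).
{ assert (Hd := cond_pos delta); assert (Hl := Rmin_l (delta / 2) ((b - m) / 2));
  assert (Hr := Rmin_r (delta / 2) ((b - m) / 2)).
  assert (0 < h) by (apply Rmin_pos; lra); unfold h in *; lra. }
destruct (MVT_cor2 f df m (m + h)) as [c [Ec Hc]]; [lra| |].
{ intros x Hx; apply is_derive_Reals, Hf; lra. }
assert (dfc_gt0 : 0 < df c).
{ assert (Hc' := Hdelta (c - m) ltac:(lra) ltac:(rewrite Rabs_pos_eq; lra)).
  replace (m + (c - m)) with c in Hc' by ring; rewrite dfm0 in Hc'.
  apply Rabs_def2 in Hc'.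
  assert (0 < (df c - 0) / (c - m)) by lra.
  replace (df c) with ((df c - 0) / (c - m) * (c - m)) by (field; lra).
  apply Rmult_lt_0_compat; lra. }
assert (f (m + h) <= f m) by (apply Hmax; lra).
assert (0 < df c * (m + h - m)) by (apply Rmult_lt_0_compat; lra).
lra.
Qed.

Section MaximumPrinciple.

Variables w dw d2w : R -> R.
Hypothesis w_at_0 : filterlim w (at_right 0) (locally 0).
Hypothesis w_at_infty : is_lim w p_infty 0.
Hypothesis is_derive_w : forall s, 0 < s -> is_derive w s (dw s).
Hypothesis is_derive_dw : forall s, 0 < s -> is_derive dw s (d2w s).
Hypothesis d2w_pos_at_crit : forall s, 0 < s -> dw s = 0 -> 0 < w s -> 0 < d2w s.

Lemma positive_interior_max s0 : 0 < s0 -> 0 < w s0 ->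
  exists a m b, 0 < a /\ a < m < b /\ 0 < w m /\ forall x, a <= x <= b -> w x <= w m.
Proof.
intros s0_gt0 ws0_gt0.
set (eps := mkposreal _ ws0_gt0).
destruct (proj1 (filterlim_locally w 0) w_at_0 eps) as [d Hd].
destruct (proj2 (is_lim_spec w p_infty 0) w_at_infty eps) as [M0 HM0].
set (a := Rmin d s0 / 2).
set (b := Rmax (M0 + 1) (s0 + 1)).
assert (Ha : 0 < a < s0 /\ a < d).
{ assert (Hd0 := cond_pos d); assert (Hl := Rmin_l d s0); assert (Hr := Rmin_r d s0).
  assert (0 < Rmin d s0) by (apply Rmin_pos; lra); unfold a; lra. }
assert (Hb : M0 < b /\ s0 < b)
  by (assert (Hl := Rmax_l (M0 + 1) (s0 + 1)); assert (Hr := Rmax_r (M0 + 1) (s0 + 1));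
      unfold b; lra).
assert (wa_lt : w a < w s0).
{ assert (Ba : ball 0 d a)
    by (change (Rabs (a - 0) < d); rewrite Rminus_0_r, Rabs_pos_eq; lra).
  assert (E := Hd a Ba (proj1 (proj1 Ha))).
  change (Rabs (w a - 0) < w s0) in E; apply Rabs_def2 in E; lra. }
assert (wb_lt : w b < w s0).
{ assert (E := HM0 b (proj1 Hb)); apply Rabs_def2 in E; simpl in E; lra. }
destruct (continuity_ab_maj w a b) as [m [Hmax Hm]]; [lra| |].
{ intros x Hx; apply continuity_pt_filterlim.
  apply (@ex_derive_continuous R_AbsRing R_NormedModule).
  exists (dw x); apply is_derive_w; lra. }
assert (Hs0 : w s0 <= w m) by (apply Hmax; lra).
exists a, m, b; split; [lra|split; [|split; [lra|exact Hmax]]].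
destruct Hm as [[Ham|Ham] [Hmb|Hmb]]; subst; lra.
Qed.

Theorem maximum_principle s : 0 < s -> w s <= 0.
Proof.
intros s_gt0; destruct (Rle_or_lt (w s) 0) as [|ws_gt0]; [easy|exfalso].
destruct (positive_interior_max s s_gt0 ws_gt0) as [a [m [b [a_gt0 [Hm [wm_gt0 Hmax]]]]]].
assert (dwm : dw m = 0).
{ apply (is_derive_local_max w a m b); [lra| |apply is_derive_w; lra].
  intros x Hx; apply Hmax; lra. }
assert (d2w m <= 0).
{ apply (is_derive_local_max_second w dw a m b (d2w m) Hm Hmax);
    [|exact dwm|apply is_derive_dw; lra].
  intros x Hx; apply is_derive_w; lra. }
assert (0 < d2w m) by (apply d2w_pos_at_crit; lra).
lra.
Qed.

End MaximumPrinciple.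

Lemma bvp_is_derive R1 f : bvp R1 f -> forall s, 0 < s ->
  is_derive f s (Derive f s) /\ is_derive (Derive f) s (Derive_n f 2 s).
Proof.
intros [_ [f_smooth _]] s s_gt0.
split; apply Derive_correct; [exact (f_smooth 0%nat s s_gt0)|exact (f_smooth 1%nat s s_gt0)].
Qed.

Lemma bvp_le R1 f g : bvp R1 f -> bvp R1 g -> forall s, 0 < s -> f s <= g s.
Proof.
intros Hf Hg s s_gt0.
assert (Df := bvp_is_derive R1 f Hf); assert (Dg := bvp_is_derive R1 g Hg).
destruct Hf as [[_ f_at_0] [_ [f_ode [f0 f_at_infty]]]].
destruct Hg as [[_ g_at_0] [_ [g_ode [g0 g_at_infty]]]].
enough (f s - g s <= 0) by lra.
apply (maximum_principle (fun x => f x - g x) (fun x => Derive f x - Derive g x)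
         (fun x => Derive_n f 2 x - Derive_n g 2 x)); [| | | | |exact s_gt0].
- assert (H := filterlim_minus_locally f g (f 0) (g 0) f_at_0 g_at_0).
  rewrite f0, g0, Rminus_0_r in H; exact H.
- assert (H := is_lim_minus' f g p_infty 0 0 f_at_infty g_at_infty).
  rewrite Rminus_0_r in H; exact H.
- intros x x_gt0; exact (@is_derive_minus R_AbsRing R_NormedModule f g x _ _
                            (proj1 (Df x x_gt0)) (proj1 (Dg x x_gt0))).
- intros x x_gt0; exact (@is_derive_minus R_AbsRing R_NormedModule _ _ x _ _
                            (proj2 (Df x x_gt0)) (proj2 (Dg x x_gt0))).
- intros x x_gt0 dw0 w_gt0.
  assert (Ef := f_ode x x_gt0); assert (Eg := g_ode x x_gt0).
  assert (0 < (f x - g x) / x ^ 2) by (apply Rdiv_lt_0_compat; [lra|apply pow_lt; lra]).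
  assert (f x / x ^ 2 - g x / x ^ 2 = (f x - g x) / x ^ 2) by (field; lra).
  replace (Derive f x) with (Derive g x) in Ef by lra.
  lra.
Qed.

Lemma bvp_unique R1 f g : bvp R1 f -> bvp R1 g -> forall s, 0 <= s -> f s = g s.
Proof.
intros Hf Hg s [s_gt0| <-].
- apply Rle_antisym; [apply (bvp_le R1)|apply (bvp_le R1)]; easy.
- destruct Hf as [_ [_ [_ [f0 _]]]]; destruct Hg as [_ [_ [_ [g0 _]]]]; congruence.
Qed.

Lemma Rabs_div_pow3_le (N D K s : R) :
  1 < s -> 0 < D -> Rabs N * s <= K * D -> Rabs (N / (s ^ 3 * D)) <= K / s ^ 4.
Proof.
intros s_gt1 D_gt0 HN.
assert (s3_gt0 : 0 < s ^ 3) by (apply pow_lt; lra).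
rewrite Rabs_div, (Rabs_pos_eq (s ^ 3 * D)) by nra.
apply Rle_div_l; [nra|].
replace (K / s ^ 4 * (s ^ 3 * D)) with (K * D / s) by (field; lra).
apply Rle_div_r; lra.
Qed.

Definition qsol (R1 s : R) : R := 48 * R1 ^ 3 * s / (5 * (2 * R1 + s ^ 2) ^ 2).
Definition dqsol (R1 s : R) : R :=
  48 * R1 ^ 3 * (2 * R1 - 3 * s ^ 2) / (5 * (2 * R1 + s ^ 2) ^ 3).
Definition d2qsol (R1 s : R) : R :=
  576 * R1 ^ 3 * s * (s ^ 2 - 2 * R1) / (5 * (2 * R1 + s ^ 2) ^ 4).

Section Solution.

Variable R1 : R.
Hypothesis R1_gt0 : 0 < R1.

Lemma qsol_denom_neq0 s : 2 * R1 + s ^ 2 <> 0.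
Proof. nra. Qed.

Lemma is_derive_qsol s : is_derive (qsol R1) s (dqsol R1 s).
Proof.
assert (Ds := qsol_denom_neq0 s).
unfold qsol, dqsol; auto_derive.
- simpl in Ds; repeat apply Rmult_integral_contrapositive_currified; lra.
- field; simpl in Ds |- *; lra.
Qed.

Lemma is_derive_dqsol s : is_derive (dqsol R1) s (d2qsol R1 s).
Proof.
assert (Ds := qsol_denom_neq0 s).
unfold dqsol, d2qsol; auto_derive.
- simpl in Ds; repeat apply Rmult_integral_contrapositive_currified; lra.
- field; simpl in Ds |- *; lra.
Qed.

Lemma qsol_denom_polynomial : polynomial_fun (fun s => 2 * R1 + s ^ 2).
Proof.
apply (polynomial_ext (fun s => 2 * R1 + s * s)); [|intro s; ring].
now apply polynomial_plus; [|apply polynomial_mult]; constructor.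
Qed.

Lemma qsol_rational : rational_over (fun s => 2 * R1 + s ^ 2) (qsol R1).
Proof.
exists (fun s => 48 * R1 ^ 3 / 5 * s), 2%nat; split.
- now apply polynomial_mult; constructor.
- intro s; assert (Ds := qsol_denom_neq0 s); unfold qsol; field; easy.
Qed.

Lemma qsol_ode s : 0 < s ->
  Derive_n (qsol R1) 2 s
  + (1 / s + 3 * s / (R1 * (1 + s ^ 2 / (2 * R1)))) * Derive (qsol R1) s
  - qsol R1 s / s ^ 2
  = - (12 * s) / (1 + s ^ 2 / (2 * R1)) ^ 3.
Proof.
intro s_gt0; simpl.
rewrite (Derive_ext _ (dqsol R1) _ (fun t => is_derive_unique _ _ _ (is_derive_qsol t))).
rewrite (is_derive_unique _ _ _ (is_derive_dqsol s)).
rewrite (is_derive_unique _ _ _ (is_derive_qsol s)).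
assert (Ds := qsol_denom_neq0 s).
assert (Ds' : 1 + s ^ 2 / (2 * R1) <> 0).
{ assert (0 <= s ^ 2 / (2 * R1)) by (apply Rdiv_le_0_compat; nra); lra. }
unfold qsol, dqsol, d2qsol; field; repeat split; lra.
Qed.

Lemma qsol_bounds s : 1 < s -> 0 <= qsol R1 s <= 48 * R1 ^ 3 / 5 * / s.
Proof.
intro s_gt1.
assert (c_ge0 : 0 <= 48 * R1 ^ 3 / 5) by (assert (0 < R1 ^ 3) by (apply pow_lt; lra); lra).
assert (Ds : 0 < 2 * R1 + s ^ 2) by nra.
assert (Es : qsol R1 s = 48 * R1 ^ 3 / 5 * (s / (2 * R1 + s ^ 2) ^ 2))
  by (unfold qsol; field; lra).
rewrite Es; split.
- apply Rmult_le_pos; [easy|]; apply Rdiv_le_0_compat; [lra|]; apply pow_lt; lra.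
- apply Rmult_le_compat_l; [easy|].
  apply Rle_div_l; [apply pow_lt; lra|].
  apply Rle_trans with (/ s * s ^ 2); [right; field; lra|].
  apply Rmult_le_compat_l; [apply Rlt_le, Rinv_0_lt_compat; lra|].
  apply pow_incr; nra.
Qed.

Lemma qsol_lim_infty : is_lim (qsol R1) p_infty 0.
Proof.
apply (is_lim_le_le_loc (fun _ => 0) (fun s => 48 * R1 ^ 3 / 5 * / s)).
- exists 1; intros s s_gt1; exact (qsol_bounds s s_gt1).
- apply is_lim_const.
- replace (Finite 0) with (Rbar_mult (48 * R1 ^ 3 / 5) 0) by (simpl; f_equal; ring).
  apply is_lim_scal_l, (is_lim_inv _ _ _ (is_lim_id p_infty)); discriminate.
Qed.

Lemma qsol_bvp : bvp R1 (qsol R1).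
Proof.
assert (cont : forall s, continuous (qsol R1) s).
{ intro s; apply (@ex_derive_continuous R_AbsRing R_NormedModule).
  exists (dqsol R1 s); apply is_derive_qsol. }
split; [split|split; [|split; [|split]]].
- intros s _; apply cont.
- apply (filterlim_filter_le_1 (F := locally 0)); [apply filter_le_within|apply cont].
- intros n s _.
  exact (rational_over_ex_derive_n _ qsol_denom_polynomial qsol_denom_neq0 _ qsol_rational n s).
- exact qsol_ode.
- unfold qsol; rewrite Rmult_0_r; apply Rdiv_0_l.
- exact qsol_lim_infty.
Qed.

Lemma qsol_minus_leading s : s <> 0 ->
  qsol R1 s - 48 * R1 ^ 3 / (5 * s ^ 3)
  = - (192 * R1 ^ 4 / 5 * (s ^ 2 + R1)) / (s ^ 3 * (2 * R1 + s ^ 2) ^ 2).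
Proof. intro s_neq0; assert (Ds := qsol_denom_neq0 s); unfold qsol; field; lra. Qed.

Lemma dqsol_plus_leading s : s <> 0 ->
  s * (dqsol R1 s + 144 * R1 ^ 3 / (5 * s ^ 4))
  = 192 * R1 ^ 4 / 5 * (5 * s ^ 4 + 9 * R1 * s ^ 2 + 6 * R1 ^ 2)
    / (s ^ 3 * (2 * R1 + s ^ 2) ^ 3).
Proof. intro s_neq0; assert (Ds := qsol_denom_neq0 s); unfold dqsol; field; lra. Qed.

Lemma qsol_expansion s : 1 < s ->
  Rabs (qsol R1 s - 48 * R1 ^ 3 / (5 * s ^ 3)) <= 192 * R1 ^ 4 / s ^ 4.
Proof.
intro s_gt1; rewrite qsol_minus_leading by lra.
assert (c_gt0 : 0 < 192 * R1 ^ 4 / 5) by (assert (0 < R1 ^ 4) by (apply pow_lt; lra); lra).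
assert (s_le : s <= 2 * R1 + s ^ 2) by nra.
apply Rabs_div_pow3_le; [lra|apply pow_lt; nra|].
rewrite Rabs_Ropp, Rabs_pos_eq by nra.
apply Rle_trans with (192 * R1 ^ 4 / 5 * (2 * R1 + s ^ 2) ^ 2); [|nra].
rewrite Rmult_assoc; apply Rmult_le_compat_l; [lra|].
simpl; nra.
Qed.

Lemma dqsol_expansion s : 1 < s ->
  Rabs (s * (dqsol R1 s + 144 * R1 ^ 3 / (5 * s ^ 4))) <= 192 * R1 ^ 4 / s ^ 4.
Proof.
intro s_gt1; rewrite dqsol_plus_leading by lra.
assert (c_gt0 : 0 < 192 * R1 ^ 4 / 5) by (assert (0 < R1 ^ 4) by (apply pow_lt; lra); lra).
assert (s_le : s <= 2 * R1 + s ^ 2) by nra.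
apply Rabs_div_pow3_le; [lra|apply pow_lt; nra|].
rewrite Rabs_pos_eq by nra.
apply Rle_trans with (192 * R1 ^ 4 / 5 * (5 * (2 * R1 + s ^ 2) ^ 3)); [|nra].
rewrite Rmult_assoc; apply Rmult_le_compat_l; [lra|].
apply Rle_trans with (5 * (2 * R1 + s ^ 2) ^ 2 * s); [apply Rmult_le_compat_r; nra|].
replace (5 * (2 * R1 + s ^ 2) ^ 3) with (5 * (2 * R1 + s ^ 2) ^ 2 * (2 * R1 + s ^ 2))
  by ring.
apply Rmult_le_compat_l; [nra|easy].
Qed.

End Solution.

Theorem lemma3 (R1 : R) (hR1 : 0 < R1) :
  exists q : R -> R,
    bvp R1 q /\
    (forall q' : R -> R, bvp R1 q' -> forall s, 0 <= s -> q' s = q s) /\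
    (exists K : R, forall s, 1 < s ->
        Rabs (q s - 48 * R1 ^ 3 / (5 * s ^ 3)) <= K / s ^ 4 /\
        Rabs (s * (Derive q s + 144 * R1 ^ 3 / (5 * s ^ 4))) <= K / s ^ 4).
Proof.
exists (qsol R1); split; [|split].
- exact (qsol_bvp R1 hR1).
- intros q' Hq'; exact (bvp_unique R1 q' (qsol R1) Hq' (qsol_bvp R1 hR1)).
- exists (192 * R1 ^ 4); intros s s_gt1; split.
  + exact (qsol_expansion R1 hR1 s s_gt1).
  + rewrite (is_derive_unique _ _ _ (is_derive_qsol R1 hR1 s)).
    exact (dqsol_expansion R1 hR1 s s_gt1).
Qed.
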